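(* Let $f\colon[0,1]\to\mathbb{R}$ be continuous. For natural $n$ let $x_n:=\sum_{k=1}^{n-1} f\big(\tfrac kn\big)$ and $y_n:=x_{n+1}-x_n$. If $\lim_{n\to\infty} y_n$ exists, then $\lim_{n\to\infty} y_n=\int_0^1 f(x)\,dx$. *)

From Stdlib Require Import Reals.
From Coquelicot Require Import Coquelicot.
Open Scope R_scope.

Definition continuous_on_01 (f : R -> R) : Prop :=
  forall x, 0 <= x <= 1 ->
    filterlim f (within (fun y => 0 <= y <= 1) (locally x)) (locally (f x)).

(* x_n = sum_{k=1}^{n-1} f(k/n)  (empty sum = 0 when n <= 1). *)
Definition xseq (f : R -> R) (n : nat) : R :=
  sum_n_m (fun k => f (INR k / INR n)) 1 (n - 1).

Definition yseq (f : R -> R) (n : nat) : R := xseq f (S n) - xseq f n.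

(* Since x_n is the telescoping sum of the y_k, Cesaro's lemma turns y_n -> l
   into x_n / n -> l.  On the other hand (x_(n+1) + f 1) / (n+1) is the
   right-endpoint Riemann sum of f for the uniform partition of [0,1] into
   n+1 pieces, which tends to the integral of f.  Integrability comes from
   continuity: composing f with the clamp onto [0,1] gives a function that is
   continuous on all of R and agrees with f on [0,1]. *)

From Stdlib Require Import Reals Lra Lia.
From Coquelicot Require Import Coquelicot.
Open Scope R_scope.

Definition clamp (a b x : R) : R := Rmax a (Rmin b x).

Section Clamp.

Variables a b : R.
Hypothesis Hab : a <= b.

Lemma clamp_in x : a <= clamp a b x <= b.
Proof. unfold clamp, Rmax, Rmin; repeat destruct Rle_dec; lra. Qed.

Lemma clamp_id x : a <= x <= b -> clamp a b x = x.
Proof. intros; unfold clamp, Rmax, Rmin; repeat destruct Rle_dec; lra. Qed.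

Lemma clamp_1_lipschitz x y : Rabs (clamp a b y - clamp a b x) <= Rabs (y - x).
Proof.
unfold clamp, Rmax, Rmin; repeat destruct Rle_dec; unfold Rabs;
repeat destruct Rcase_abs; lra.
Qed.

Lemma filterlim_clamp_within x :
  filterlim (clamp a b) (locally x)
    (within (fun y => a <= y <= b) (locally (clamp a b x))).
Proof.
intros P [eps HP]; exists eps; intros y Hy.
apply HP; [|apply clamp_in].
eapply Rle_lt_trans; [apply clamp_1_lipschitz | exact Hy].
Qed.

Lemma ex_RInt_continuous_within (f : R -> R) :
  (forall x, a <= x <= b ->
     filterlim f (within (fun y => a <= y <= b) (locally x)) (locally (f x))) ->
  ex_RInt f a b.
Proof.
intros Hf.
apply (ex_RInt_ext (fun x => f (clamp a b x))).
- rewrite Rmin_left, Rmax_right by exact Hab.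
  intros x Hx; rewrite clamp_id by lra; reflexivity.
- apply (ex_RInt_continuous (V := R_CompleteNormedModule)); intros z _.
  eapply filterlim_comp; [apply filterlim_clamp_within | apply Hf, clamp_in].
Qed.

End Clamp.

Lemma Riemann_sum_map_iota (g : R -> R) (p : R -> R -> R) (h : nat -> R) m s :
  Riemann_sum g (SF_seq_f2 p (seq.map h (seq.iota s (S (S m))))) =
  sum_n_m (fun j => (h (S j) - h j) * g (p (h j) (h (S j)))) s (s + m).
Proof.
revert s; induction m as [|m IH]; intros s.
- rewrite Nat.add_0_r, sum_n_n.
  change (seq.map h (seq.iota s 2)) with (cons (h s) (cons (h (S s)) nil)).
  rewrite SF_cons_f2 by (simpl; auto).
  rewrite Riemann_sum_cons; cbn; unfold plus, scal, zero, mult; cbn; ring.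
- change (seq.map h (seq.iota s (S (S (S m)))))
    with (cons (h s) (seq.map h (seq.iota (S s) (S (S m))))).
  rewrite SF_cons_f2 by (simpl; auto with arith).
  rewrite Riemann_sum_cons, IH, (sum_Sn_m _ s) by lia.
  replace (S s + m)%nat with (s + S m)%nat by lia.
  reflexivity.
Qed.

Lemma Riemann_sum_unif_part_right (g : R -> R) a b n :
  Riemann_sum g (SF_seq_f2 (fun _ y => y) (unif_part a b n)) =
  sum_n_m (fun k => (b - a) / INR (S n) * g (a + INR k * (b - a) / INR (S n))) 1 (S n).
Proof.
unfold unif_part, seq.mkseq; rewrite Riemann_sum_map_iota, <- sum_n_m_S.
apply sum_n_m_ext; intros k.
rewrite !S_INR; f_equal; field.
pose proof (pos_INR n); lra.
Qed.

Lemma Riemann_sum_unif_part_01_xseq (f : R -> R) n :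
  Riemann_sum f (SF_seq_f2 (fun _ y => y) (unif_part 0 1 n)) =
  (xseq f (S n) + f 1) / INR (S n).
Proof.
assert (Hn : 0 < INR (S n)) by apply lt_0_INR, Nat.lt_0_succ.
rewrite Riemann_sum_unif_part_right, sum_n_Sm by lia.
unfold xseq; rewrite Nat.sub_succ, Nat.sub_0_r.
rewrite (sum_n_m_ext _ (fun k => mult (/ INR (S n)) (f (INR k / INR (S n))))).
2:{ intros k; rewrite Rminus_0_r, Rplus_0_l, !Rmult_1_r, Rdiv_1_l; reflexivity. }
rewrite sum_n_m_mult_l.
replace (0 + INR (S n) * (1 - 0) / INR (S n)) with 1 by (field; lra).
unfold plus, mult; cbn -[INR sum_n_m]; set (s := sum_n_m _ _ _); field; lra.
Qed.

Lemma is_lim_seq_div_INR_S (c : R) : is_lim_seq (fun n => c / INR (S n)) 0.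
Proof.
rewrite <- (Rbar_mult_0_r c).
apply is_lim_seq_scal_l, (is_lim_seq_inv _ p_infty); [|discriminate].
apply (is_lim_seq_incr_1 INR), is_lim_seq_INR.
Qed.

Lemma filterlim_unif_part_Riemann_fine (p : R -> R -> R) a b :
  (forall x y, x <= y -> x <= p x y <= y) -> a <= b ->
  filterlim (fun n => SF_seq_f2 p (unif_part a b n)) eventually (Riemann_fine a b).
Proof.
intros Hp Hab P [delta HP].
assert (Hmesh : eventually (fun n => (b - a) / INR (S n) < delta)).
{ apply (is_lim_seq_div_INR_S (b - a) (fun x => x < delta)); exists delta; intros x Hx.
  change (Rabs (x - 0) < delta) in Hx; rewrite Rminus_0_r in Hx.
  exact (Rle_lt_trans _ _ _ (Rle_abs x) Hx). }
unfold filtermap; revert Hmesh; apply filter_imp; intros n Hn.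
destruct (Riemann_fine_unif_part p a b n Hp Hab) as [Hstep Hptd].
apply HP.
- rewrite S_INR in Hn; lra.
- rewrite Rmin_left, Rmax_right by exact Hab; exact Hptd.
Qed.

Lemma is_lim_seq_Riemann_sum_unif_part (f : R -> R) (p : R -> R -> R) a b If :
  (forall x y, x <= y -> x <= p x y <= y) -> a < b ->
  is_RInt f a b If ->
  is_lim_seq (fun n => Riemann_sum f (SF_seq_f2 p (unif_part a b n))) If.
Proof.
intros Hp Hab HI.
apply (is_lim_seq_ext (fun n => scal (sign (b - a)) (Riemann_sum f (SF_seq_f2 p (unif_part a b n))))).
- intros n; rewrite sign_eq_1 by lra; apply Rmult_1_l.
- apply (filterlim_comp _ _ _ (fun n => SF_seq_f2 p (unif_part a b n))
    (fun ptd => scal (sign (b - a)) (Riemann_sum f ptd)) _ (Riemann_fine a b)).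
  + apply filterlim_unif_part_Riemann_fine; [exact Hp | lra].
  + exact HI.
Qed.

Lemma sum_f_R0_telescope (u : nat -> R) m :
  sum_f_R0 (fun k => u (S k) - u k) m = u (S m) - u O.
Proof. induction m as [|m IH]; simpl; [|rewrite IH]; ring. Qed.

Lemma is_lim_seq_Cesaro_diff (u : nat -> R) (l : R) :
  is_lim_seq (fun n => u (S n) - u n) l ->
  is_lim_seq (fun n => u n / INR n) l.
Proof.
intros Hdiff.
apply is_lim_seq_incr_1.
assert (Hmean : is_lim_seq (fun n => (u (S n) - u O) / INR (S n)) l).
{ apply is_lim_seq_Reals, Cesaro_1 in Hdiff.
  apply is_lim_seq_Reals, is_lim_seq_incr_1 in Hdiff.
  eapply is_lim_seq_ext; [|exact Hdiff].
  intros n; cbv beta; simpl (Nat.pred (S n)); rewrite sum_f_R0_telescope; reflexivity. }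
rewrite <- (Rplus_0_r l).
eapply is_lim_seq_ext;
  [|exact (is_lim_seq_plus' _ _ _ _ Hmean (is_lim_seq_div_INR_S (u O)))].
intros n; cbv beta; unfold Rdiv; ring.
Qed.

Theorem proposition2 (f : R -> R) (l : R) :
  continuous_on_01 f ->
  is_lim_seq (yseq f) l ->
  l = RInt f 0 1.
Proof.
intros Hf Hy.
assert (Hint : is_RInt f 0 1 (RInt f 0 1))
  by exact (RInt_correct _ _ _ (ex_RInt_continuous_within 0 1 Rle_0_1 f Hf)).
assert (Hint_sum : is_lim_seq
          (fun n => Riemann_sum f (SF_seq_f2 (fun _ y => y) (unif_part 0 1 n)))
          (RInt f 0 1)).
{ apply is_lim_seq_Riemann_sum_unif_part; [intros; lra | exact Rlt_0_1 | exact Hint]. }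
assert (Hmean : is_lim_seq (fun n => xseq f (S n) / INR (S n)) l)
  by exact (proj1 (is_lim_seq_incr_1 _ _) (is_lim_seq_Cesaro_diff _ _ Hy)).
assert (Hmean_sum : is_lim_seq
          (fun n => Riemann_sum f (SF_seq_f2 (fun _ y => y) (unif_part 0 1 n)))
          (l + 0)).
{ eapply is_lim_seq_ext; [|exact (is_lim_seq_plus' _ _ _ _ Hmean (is_lim_seq_div_INR_S (f 1)))].
  intros n; rewrite Riemann_sum_unif_part_01_xseq; unfold Rdiv; ring. }
apply is_lim_seq_unique in Hint_sum, Hmean_sum.
rewrite Hint_sum in Hmean_sum; injection Hmean_sum; lra.
Qed.
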